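(* Let $\sim_{\mathrm{NC}}$ be the equivalence relation on $S_n$ generated by $\sigma\sim_{\mathrm{NC}}\sigma s_i$ whenever $1\le i<n$ and $i\in\{\sigma(i),\sigma(i+1)\}$. Then the equivalence class of $\sim_{\mathrm{NC}}$ containing the identity is exactly $\mathrm{NC}_n$.
   Context: $s_i=(i,i+1)$ and $\sigma s_i=\sigma\circ s_i$. A set partition of $[n]$ is noncrossing if there are no distinct blocks $P,Q$ with $a,b\in P$, $c,d\in Q$, $a<c<b<d$. To a noncrossing partition associate $\sigma\in S_n$ acting on each block $\{a_1<\dots<a_p\}$ by $\sigma(a_j)=a_{j-1}$ ($j\ge2$), $\sigma(a_1)=a_p$; $\mathrm{NC}_n$ is the set of these (noncrossing) permutations. *)

(* [n] = {1..n} is represented by 'I_n = {0..n-1}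
   (order-preserving shift by one). *)
From mathcomp Require Import all_boot all_fingroup.
From Stdlib Require Export Relation_Operators.

Set Implicit Arguments.
Unset Strict Implicit.
Unset Printing Implicit Defensive.

Local Open Scope group_scope.

Definition adj_swap (n : nat) (i : nat) (Hi : i.+1 < n) : 'S_n :=
  tperm (Ordinal (ltnW Hi)) (Ordinal Hi).

(* sigma \circ s_i : x |-> sigma (s_i x).  In mathcomp, (s * t) x = t (s x),
   so sigma \circ s_i = s_i * sigma. *)
Definition comp_swap (n : nat) (sigma : 'S_n) (i : nat) (Hi : i.+1 < n) : 'S_n :=
  adj_swap Hi * sigma.

Definition nc_step (n : nat) (sigma tau : 'S_n) : Prop :=
  exists (i : nat) (Hi : i.+1 < n),
    (Ordinal (ltnW Hi) = sigma (Ordinal (ltnW Hi)) \/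
     Ordinal (ltnW Hi) = sigma (Ordinal Hi)) /\
    tau = comp_swap sigma Hi.

Definition nc_equiv (n : nat) : 'S_n -> 'S_n -> Prop :=
  clos_refl_sym_trans 'S_n (@nc_step n).

Definition noncrossing (n : nat) (P : {set {set 'I_n}}) : Prop :=
  forall B1 B2, B1 \in P -> B2 \in P -> B1 != B2 ->
    ~ exists a b c d : 'I_n,
        [/\ a \in B1, b \in B1, c \in B2, d \in B2 & (a < c < b) && (b < d)]%N.

(* Within a block B = {a_1 < ... < a_p} containing x:
   sigma(a_j) = a_{j-1} for j >= 2 and sigma(a_1) = a_p.
   [block_cycle B x y] says y is that image of x. *)
Definition block_cycle (n : nat) (B : {set 'I_n}) (x y : 'I_n) : Prop :=
  y \in B /\
  (if [exists z in B, (z < x)%N]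
   then (y < x)%N /\ (forall z, z \in B -> (z < x)%N -> (z <= y)%N)
   else (forall z, z \in B -> (z <= y)%N)).

Definition perm_of_partition (n : nat) (P : {set {set 'I_n}}) (sigma : 'S_n) : Prop :=
  forall x : 'I_n, block_cycle (pblock P x) x (sigma x).

Definition NC (n : nat) (sigma : 'S_n) : Prop :=
  exists P : {set {set 'I_n}},
    [/\ partition P [set: 'I_n], noncrossing P & perm_of_partition P sigma].

From mathcomp Require Import all_boot all_fingroup.
From mathcomp Require Import zify.

Set Implicit Arguments.
Unset Strict Implicit.
Unset Printing Implicit Defensive.

(* Encode a noncrossing partition by the map sending each point to its block.
   For adjacent points a < b = a + 1, a step sigma -> sigma s_a with
   sigma(a) = a merges the singleton {a} into the block of b, and a step with
   sigma(b) = a splits a off the block of b.  Since no point lies strictly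
   between a and b, both operations keep the partition noncrossing and the
   new permutation still cycles each block downwards; the step relation is
   symmetric, so the whole class of the identity lies in NC_n.  Conversely,
   let sigma in NC_n be different from the identity and let j be its least
   descent, sigma(j) < j.  If sigma(j) = j - 1 the split step applies.
   Otherwise the arc from j to sigma(j) covers j - 1, so by noncrossingness
   sigma(j - 1) < j, while minimality of j gives sigma(j - 1) >= j - 1; hence
   j - 1 is fixed and the merge step applies.  Both steps strictly decrease
   sum_x (2 |x - sigma(x)| + [sigma(x) = x]), and induction on this weight
   reaches the identity. *)

Definition crossing n (X Y : {set 'I_n}) : Prop :=
  exists a b c d : 'I_n,
    [/\ a \in X, b \in X, c \in Y, d \in Y & (a < c < b) && (b < d)].

Record nc_blocks n (f : 'I_n -> {set 'I_n}) (s : 'S_n) : Prop := NCBlocks {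
  mem_block : forall x, x \in f x;
  block_eq : forall x y, y \in f x -> f y = f x;
  blocks_noncrossing : forall x y, f x != f y -> ~ crossing (f x) (f y);
  block_cycle_perm : forall x, block_cycle (f x) x (s x) }.

Lemma NC_blocksP n (s : 'S_n) : NC s <-> exists f, nc_blocks f s.
Proof.
split=> [[P [/and3P[/eqP coverP trivP _] ncP cycP]] | [f [fx fy fnc fc]]].
  have memP x : x \in pblock P x by rewrite mem_pblock coverP inE.
  have blockP x : pblock P x \in P by rewrite pblock_mem // coverP inE.
  exists (pblock P); split=> // [x y|x y ne [a [b [c [d abcd]]]]].
    exact: same_pblock.
  by apply: (ncP _ _ (blockP x) (blockP y) ne); exists a, b, c, d.
pose P := [set f x | x in [set: 'I_n]].
have trivP : trivIset P.
  apply/trivIsetP => _ _ /imsetP[x _ ->] /imsetP[y _ ->] ne.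
  apply/pred0P => z /=; apply/negP => /andP[zx zy].
  by move: ne; rewrite -(fy _ _ zx) -(fy _ _ zy) eqxx.
have pblockP x : pblock P x = f x by apply: def_pblock; rewrite ?imset_f.
exists P; split=> [|_ _ /imsetP[x _ ->] /imsetP[y _ ->] ne|x].
- apply/and3P; split=> //.
    apply/eqP/setP => x; rewrite inE; apply/bigcupP; exists (f x) => //.
    exact: imset_f.
  by apply/imsetP => -[x _ x0]; move: (fx x); rewrite -x0 inE.
- exact: fnc.
- by rewrite pblockP.
Qed.

Lemma block_cycleE n (B : {set 'I_n}) (x y : 'I_n) :
  block_cycle B x y <->
  y \in B /\ ((y < x /\ {in B, forall z : 'I_n, z < x -> z <= y}) \/
              (x <= y /\ {in B, forall z : 'I_n, x <= z <= y})).
Proof.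
rewrite /block_cycle; case: ifP => [/existsP[z /andP[zB zx]] | /existsP noz].
  split=> [[yB [yx ymax]] | [yB [[yx ymax] | [_ /(_ z zB)]]]] //; first by split=> //; left.
  lia.
have xz z : z \in B -> x <= z.
  by move=> zB; rewrite leqNgt; apply: contra_notN noz => zx; exists z; rewrite zB.
split=> [[yB ymax] | [yB [[yx _] | [_ ymax]]]].
- by split=> //; right; split=> [|z zB]; rewrite ?xz ?ymax.
- by have := xz y yB; lia.
- by split=> // z /ymax /andP[].
Qed.

Lemma block_cycle_set1 n (x : 'I_n) : block_cycle [set x] x x.
Proof.
by apply/block_cycleE; split; [rewrite inE | right; split=> [|z /set1P ->]; rewrite ?leqnn].
Qed.

Lemma block_cycle_setD1 n (B : {set 'I_n}) (a x y : 'I_n) :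
  y != a -> block_cycle B x y -> block_cycle (B :\ a) x y.
Proof.
move=> ya /block_cycleE[yB cyc]; apply/block_cycleE.
split; first by rewrite !inE ya.
by case: cyc => [[yx ymax] | [xy ymax]]; [left | right]; split=> // z /setD1P[_ /ymax].
Qed.

Lemma crossing_sub n (X Y X' Y' : {set 'I_n}) :
  X \subset X' -> Y \subset Y' -> crossing X Y -> crossing X' Y'.
Proof.
move=> /subsetP sX /subsetP sY [u [v [c [d [uX vX cY dY uvcd]]]]].
by exists u, v, c, d; split; auto.
Qed.

Lemma crossing_set1l n (x : 'I_n) Y : ~ crossing [set x] Y.
Proof. by move=> [u [v [c [d [/set1P -> /set1P -> _ _ xcxd]]]]]; lia. Qed.

Lemma crossing_set1r n (x : 'I_n) X : ~ crossing X [set x].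
Proof. by move=> [u [v [c [d [_ _ /set1P -> /set1P -> uxvx]]]]]; lia. Qed.

Section AdjacentPoints.

Variables (n : nat) (a b : 'I_n).
Hypothesis ab_succ : b = a.+1 :> nat.

Lemma adjacent_neq : a != b.
Proof. by apply/eqP => ab; move: ab_succ; rewrite ab; lia. Qed.

Let shift (u : 'I_n) := if u == a then b else u.

Let mem_shift (X : {set 'I_n}) u : b \in X -> u \in a |: X -> shift u \in X.
Proof. by rewrite /shift => bX /setU1P[->|uX]; rewrite ?eqxx //; case: eqP => // ->. Qed.

(* No point lies strictly between [a] and [b]. *)
Let shift_cmp (c u : 'I_n) : c != a :> nat -> c != b :> nat ->
  ((u < c) = (shift u < c)) * ((c < u) = (c < shift u)).
Proof. by rewrite /shift => ca cb; case: eqP => [->|_]; split; lia. Qed.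

Lemma crossing_setU1l (X Y : {set 'I_n}) : b \in X -> a \notin Y -> b \notin Y ->
  crossing (a |: X) Y -> crossing X Y.
Proof.
move=> bX aY bY [u [v [c [d [uX vX cY dY uvcd]]]]].
have [ca cb] := (memPn aY c cY, memPn bY c cY).
have [da db] := (memPn aY d dY, memPn bY d dY).
exists (shift u), (shift v), c, d; split; rewrite ?mem_shift //.
by rewrite -!(shift_cmp _ ca cb) -(shift_cmp _ da db).
Qed.

Lemma crossing_setU1r (X Y : {set 'I_n}) : b \in X -> a \notin Y -> b \notin Y ->
  crossing Y (a |: X) -> crossing Y X.
Proof.
move=> bX aY bY [c [d [u [v [cY dY uX vX cuvd]]]]].
have [ca cb] := (memPn aY c cY, memPn bY c cY).
have [da db] := (memPn aY d dY, memPn bY d dY).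
exists c, d, (shift u), (shift v); split; rewrite ?mem_shift //.
by rewrite -!(shift_cmp _ ca cb) -!(shift_cmp _ da db).
Qed.

Lemma block_cycle_setU1 (B : {set 'I_n}) x y :
  b \in B -> x != b -> block_cycle B x y -> block_cycle (a |: B) x y.
Proof.
move=> bB xb /block_cycleE[yB cyc]; apply/block_cycleE.
split; first by rewrite in_setU1 yB orbT.
have xb' : x != b :> nat := xb.
case: cyc => [[yx ymax] | [xy ymax]]; [left | right]; split=> // z /setU1P[->|/ymax //];
  by have := ymax b bB; lia.
Qed.

Lemma block_cycle_merge (B : {set 'I_n}) y :
  a \notin B -> block_cycle B b y -> block_cycle (a |: B) a y.
Proof.
move=> aB /block_cycleE[yB cyc]; apply/block_cycleE.
split; first by rewrite in_setU1 yB orbT.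
have ya : y != a :> nat := memPn aB y yB.
case: cyc => [[yb ymax] | [by_ ymax]]; [left | right]; split=> [|z /setU1P[->|zB]]; try lia.
  by move=> za; apply: ymax; lia.
by have := ymax z zB; have := memPn aB z zB; lia.
Qed.

Lemma block_cycle_merge_succ (B : {set 'I_n}) : block_cycle (a |: B) b a.
Proof. by apply/block_cycleE; split; rewrite ?setU11 //; left; split=> [|z _]; lia. Qed.

Lemma block_cycle_split (B : {set 'I_n}) y :
  y != a -> block_cycle B a y -> block_cycle (B :\ a) b y.
Proof.
move=> ya /block_cycleE[yB cyc]; apply/block_cycleE.
split; first by rewrite !inE ya.
have ya' : y != a :> nat := ya.
case: cyc => [[yx ymax] | [xy ymax]]; [left | right];
  split=> [|z /setD1P[za zB]]; try lia.
  by move=> zb; apply: ymax => //; have za' : z != a :> nat := za; lia.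
by have := ymax z zB; have za' : z != a :> nat := za; lia.
Qed.

End AdjacentPoints.

Section BlockMaps.

Variables (n : nat) (f : 'I_n -> {set 'I_n}) (s : 'S_n).
Hypothesis fs : nc_blocks f s.

Lemma block_memC x y : y \in f x -> x \in f y.
Proof. by move=> /(block_eq fs) ->; exact: (mem_block fs x). Qed.

Lemma mem_block_eq x y {z : 'I_n} : y \in f x -> (y \in f z) = (x \in f z).
Proof.
by move=> yx; apply/idP/idP => /(block_eq fs) <-; [apply: block_memC |].
Qed.

Lemma perm_mem_block x : s x \in f x.
Proof. by have /block_cycleE[] := block_cycle_perm fs x. Qed.

Lemma block_fixed x : s x = x -> f x = [set x].
Proof.
move=> sx; apply/setP => z; rewrite inE.
apply/idP/eqP => [zx|->]; last exact: (mem_block fs x).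
have := block_cycle_perm fs x; rewrite sx => /block_cycleE[_ [[]|[_ /(_ z zx) xzx]]].
  by rewrite ltnn.
by apply/val_inj/eqP; rewrite eqn_leq andbC.
Qed.

End BlockMaps.

Section Merge.

Variables (n : nat) (f : 'I_n -> {set 'I_n}) (s : 'S_n) (a b : 'I_n).
Hypotheses (ab_succ : b = a.+1 :> nat) (fs : nc_blocks f s) (sa : s a = a).

Let A := f a :|: f b.
Let g x := if x \in A then A else f x.

Let fa : f a = [set a]. Proof. exact: (block_fixed fs sa). Qed.

Let a_notin_fb : a \notin f b.
Proof.
by apply/negP => /(block_memC fs); rewrite fa inE eq_sym (negbTE (adjacent_neq ab_succ)).
Qed.

Let A_closed x y : y \in f x -> (y \in A) = (x \in A).
Proof. by move=> yx; rewrite !inE !(mem_block_eq fs yx). Qed.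

Let A_outside y : y \notin A -> (a \notin f y) && (b \notin f y).
Proof.
move=> yA; apply/andP; split; apply: contra yA => /A_closed <-;
  by rewrite !inE (mem_block fs) ?orbT.
Qed.

Let fb_neq y : y \notin A -> f b != f y.
Proof.
by move=> yA; apply: contraNneq yA => fby; rewrite /A !inE fby (mem_block fs) orbT.
Qed.

Let merge_mem x : x \in g x.
Proof. by rewrite /g; case: ifP => // _; exact: (mem_block fs x). Qed.

Let merge_eq x y : y \in g x -> g y = g x.
Proof.
rewrite /g; case: ifP => [_ yA | xA yx]; first by rewrite yA.
by rewrite (A_closed yx) xA (block_eq fs yx).
Qed.

Let merge_noncrossing x y : g x != g y -> ~ crossing (g x) (g y).
Proof.
rewrite /g; case: ifP => xA; case: ifP => yA; first by rewrite eqxx.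
- have /andP[aY bY] := A_outside (negbT yA).
  move=> _; rewrite /A fa => /(crossing_setU1l ab_succ (mem_block fs b) aY bY).
  exact: (blocks_noncrossing fs (fb_neq (negbT yA))).
- have /andP[aX bX] := A_outside (negbT xA).
  move=> _; rewrite /A fa => /(crossing_setU1r ab_succ (mem_block fs b) aX bX).
  by apply: (blocks_noncrossing fs); rewrite eq_sym fb_neq ?xA.
- exact: (blocks_noncrossing fs).
Qed.

Let merge_cycle x : block_cycle (g x) x ((tperm a b * s)%g x).
Proof.
rewrite permM /g /A fa; case: tpermP => [->|->|xa xb].
- by rewrite setU11; exact: (block_cycle_merge ab_succ a_notin_fb (block_cycle_perm fs b)).
- by rewrite sa in_setU1 (mem_block fs) orbT; exact: (block_cycle_merge_succ ab_succ).
- case: ifP => [/setU1P[//|xfb] | _]; last exact: (block_cycle_perm fs x).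
  apply: (block_cycle_setU1 ab_succ (mem_block fs b) (introN eqP xb)).
  by rewrite -(block_eq fs xfb); apply: block_cycle_perm.
Qed.

Lemma nc_blocks_merge : exists g, nc_blocks g (tperm a b * s)%g.
Proof.
by exists g; split;
  [apply: merge_mem | apply: merge_eq | apply: merge_noncrossing | apply: merge_cycle].
Qed.

End Merge.

Section Split.

Variables (n : nat) (f : 'I_n -> {set 'I_n}) (s : 'S_n) (a b : 'I_n).
Hypotheses (ab_succ : b = a.+1 :> nat) (fs : nc_blocks f s) (sb : s b = a).

Let g x := if x == a then [set a] else if x \in f b then f b :\ a else f x.

Let ba : b != a. Proof. by rewrite eq_sym (adjacent_neq ab_succ). Qed.

Let a_in_fb : a \in f b. Proof. by rewrite -sb perm_mem_block. Qed.

Let fa : f a = f b. Proof. exact: (block_eq fs a_in_fb). Qed.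

Let split_sub x : g x \subset f x.
Proof.
rewrite /g; case: eqP => [->|_]; first by rewrite sub1set (mem_block fs).
by case: ifP => [xb|_]; [rewrite (block_eq fs xb) subD1set | apply: subxx].
Qed.

Let split_mem x : x \in g x.
Proof.
rewrite /g; case: eqP => [->|/eqP xa]; first by rewrite inE.
by case: ifP => [xfb|_]; [rewrite !inE xa | exact: (mem_block fs x)].
Qed.

Let split_eq x y : y \in g x -> g y = g x.
Proof.
rewrite /g; case: (eqVneq x a) => [_ /set1P ->|_]; first by rewrite eqxx.
case: ifP => [_ | xfb yx]; first by rewrite !inE => /andP[/negbTE -> ->].
case: eqP yx => [-> ax|_ yx]; first by move: xfb; rewrite -fa (block_memC fs ax).
by rewrite (mem_block_eq fs yx) xfb (block_eq fs yx).
Qed.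

Let split_noncrossing x y : g x != g y -> ~ crossing (g x) (g y).
Proof.
have [fxy|fxy] := eqVneq (f x) (f y); last first.
  move=> _ /(crossing_sub (split_sub x) (split_sub y)).
  exact: (blocks_noncrossing fs fxy).
rewrite /g; have [_ _|_] := eqVneq x a; first exact: crossing_set1l.
have [_ _|_] := eqVneq y a; first exact: crossing_set1r.
have yx : y \in f x by rewrite fxy (mem_block fs).
by rewrite (mem_block_eq fs yx) fxy eqxx.
Qed.

Let split_cycle x : block_cycle (g x) x ((tperm a b * s)%g x).
Proof.
rewrite permM /g; case: tpermP => [->|->|xa xb].
- by rewrite eqxx sb; apply: block_cycle_set1.
- rewrite (negbTE ba) (mem_block fs); apply: (block_cycle_split ab_succ).
    by rewrite -{2}sb (inj_eq perm_inj) eq_sym.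
  by rewrite -fa; apply: block_cycle_perm.
- rewrite (introF eqP xa); case: ifP => [xfb|_]; last exact: (block_cycle_perm fs x).
  apply: block_cycle_setD1; first by rewrite -sb (inj_eq perm_inj); apply/eqP.
  by rewrite -(block_eq fs xfb); apply: block_cycle_perm.
Qed.

Lemma nc_blocks_split : exists g, nc_blocks g (tperm a b * s)%g.
Proof.
by exists g; split;
  [apply: split_mem | apply: split_eq | apply: split_noncrossing | apply: split_cycle].
Qed.

End Split.

Lemma NC_merge n (s : 'S_n) (a b : 'I_n) :
  b = a.+1 :> nat -> s a = a -> NC s -> NC (tperm a b * s).
Proof. by move=> ab sa /NC_blocksP[f fs]; apply/NC_blocksP/(nc_blocks_merge ab fs sa). Qed.

Lemma NC_split n (s : 'S_n) (a b : 'I_n) :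
  b = a.+1 :> nat -> s b = a -> NC s -> NC (tperm a b * s).
Proof. by move=> ab sb /NC_blocksP[f fs]; apply/NC_blocksP/(nc_blocks_split ab fs sb). Qed.

Lemma NC1 n : NC (1 : 'S_n).
Proof.
apply/NC_blocksP; exists (fun x => [set x]).
split=> [x | x y /set1P -> // | x y _ | x]; first by rewrite inE.
  exact: crossing_set1l.
by rewrite perm1; apply: block_cycle_set1.
Qed.

Lemma nc_step_tperm n (s : 'S_n) (a b : 'I_n) :
  b = a.+1 :> nat -> s a = a \/ s b = a -> nc_step s (tperm a b * s).
Proof.
move=> ab fixed_or_pred; have Hi : a.+1 < n by rewrite -ab.
exists a, Hi; rewrite /comp_swap /adj_swap.
have -> : Ordinal (ltnW Hi) = a by apply: val_inj.
have -> : Ordinal Hi = b by apply: val_inj.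
by split=> //; case: fixed_or_pred => ->; [left | right].
Qed.

Lemma nc_step_NC n (s t : 'S_n) : nc_step s t -> NC s -> NC t.
Proof.
case=> i [Hi [[sa | sb] ->]]; rewrite /comp_swap /adj_swap.
  exact: (NC_merge _ (esym sa)).
exact: (NC_split _ (esym sb)).
Qed.

Lemma nc_step_sym n (s t : 'S_n) : nc_step s t -> nc_step t s.
Proof.
case=> i [Hi [cond ->]]; exists i, Hi; split.
  by rewrite /comp_swap /adj_swap !permM tpermL tpermR; case: cond; [right | left].
by rewrite /comp_swap /adj_swap mulgA tperm2 mul1g.
Qed.

Lemma nc_equiv_NC n (s t : 'S_n) : nc_equiv s t -> NC s <-> NC t.
Proof.
elim=> {s t} [s t st | s | s t _ IH | s t u _ IH1 _ IH2]; try tauto.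
by split; apply: nc_step_NC; last apply: nc_step_sym.
Qed.

(* Fixed points cost 1, so that the merge step, which keeps the total distance
   sum_x |x - sigma(x)|, still decreases the weight. *)
Definition displacement (x y : nat) : nat := 2 * ((x - y) + (y - x)) + (x == y).

Definition total_displacement n (s : 'S_n) : nat := \sum_(x : 'I_n) displacement x (s x).

Lemma total_displacement_tperm n (s : 'S_n) (a b : 'I_n) : a != b ->
  total_displacement (tperm a b * s) + displacement a (s a) + displacement b (s b) =
  total_displacement s + displacement a (s b) + displacement b (s a).
Proof.
move=> ab; pose others (F : 'I_n -> nat) := \sum_(x | (x != a) && (x != b)) F x.
have sum2 F : \sum_x F x = F a + F b + others F.
  by rewrite (bigD1 a) // (bigD1 b) 1?eq_sym //= addnA.
rewrite /total_displacement !sum2 !permM tpermL tpermR.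
have -> : others (fun x => displacement x ((tperm a b * s)%g x)) =
          others (fun x => displacement x (s x)).
  by apply: eq_bigr => x /andP[xa xb]; rewrite permM tpermD // eq_sym.
set rest := others _; lia.
Qed.

Section AdjacentTransposition.

Variables (n : nat) (s : 'S_n) (a b : 'I_n).
Hypothesis ab_succ : b = a.+1 :> nat.

Lemma total_displacement_split :
  s b = a -> a <= s a -> total_displacement (tperm a b * s) < total_displacement s.
Proof.
move=> sb asa; have := total_displacement_tperm s (adjacent_neq ab_succ).
have sa : s a != a by rewrite -{2}sb (inj_eq perm_inj) adjacent_neq.
have sa' : s a != a :> nat := sa.
by rewrite sb /displacement; lia.
Qed.

Lemma total_displacement_merge :
  s a = a -> s b < b -> total_displacement (tperm a b * s) < total_displacement s.
Proof.
move=> sa sbb; have := total_displacement_tperm s (adjacent_neq ab_succ).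
have sb : s b != a by rewrite -sa (inj_eq perm_inj) eq_sym adjacent_neq.
have sb' : s b != a :> nat := sb.
by rewrite sa /displacement; lia.
Qed.

End AdjacentTransposition.

Lemma perm_ge_id n (s : 'S_n) : (forall x : 'I_n, x <= s x) -> s = 1%g.
Proof.
move=> ge_s; apply/permP => x; rewrite perm1; apply/val_inj/eqP; rewrite eq_sym.
have /leqif_sum[_] : forall y : 'I_n, true -> y <= s y ?= iff (y == s y :> nat).
  by move=> y _; apply: leqif_eq.
rewrite [X in X == _](reindex_inj (@perm_inj _ s)) eqxx.
by move/esym/forall_inP/(_ x isT).
Qed.

Lemma NC_arc_nested n (s : 'S_n) (j x : 'I_n) : NC s -> s j < x < j -> s x < j.
Proof.
move=> /NC_blocksP[f fs] /andP[jx xj]; rewrite ltnNge; apply/negP => jsx.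
have x_notin : x \notin f j.
  apply/negP => xfj; have /block_cycleE[_ [[_ pred_j] | [jsj _]]] := block_cycle_perm fs j.
    by have := pred_j x xfj xj; lia.
  lia.
have fjx : f j != f x by apply: contraNneq x_notin => ->; apply: (mem_block fs).
have sxj : s x != j.
  by apply: contraNneq fjx => sx; rewrite -(block_eq fs (perm_mem_block fs x)) sx.
have sxj' : s x != j :> nat := sxj.
apply: (blocks_noncrossing fs fjx); exists (s j), j, x, (s x).
by split; rewrite ?(perm_mem_block fs) ?(mem_block fs) //; lia.
Qed.

Lemma NC_displacement_descent n (s : 'S_n) : NC s -> s != 1%g ->
  exists2 t, nc_step s t & total_displacement t < total_displacement s.
Proof.
move=> ncs s1.
have [j0 j0_desc] : exists j : 'I_n, s j < j.
  case: (pickP (fun j : 'I_n => s j < j)) => [j0 ? | no_desc]; first by exists j0.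
  by case/eqP: s1; apply: perm_ge_id => x; rewrite leqNgt no_desc.
case: (@arg_minnP _ j0 (fun j : 'I_n => s j < j) (@nat_of_ord n) j0_desc) => j j_desc j_min.
have below_j (z : 'I_n) : z < j -> z <= s z.
  by move=> zj; rewrite leqNgt; apply/negP => /j_min; lia.
have [adj | not_adj] := eqVneq (s j).+1 j.
  have ab : j = (s j).+1 :> nat by rewrite adj.
  exists (tperm (s j) j * s)%g; first exact: (nc_step_tperm ab (or_intror erefl)).
  by apply: (total_displacement_split ab erefl); apply: below_j; lia.
have Ha : j.-1 < n by rewrite (leq_ltn_trans (leq_pred j)).
pose a := Ordinal Ha.
have ab : j = a.+1 :> nat by rewrite /= prednK //; lia.
have sa : s a = a.
  apply/val_inj/eqP; rewrite eqn_leq below_j /=; last lia.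
  by have := @NC_arc_nested n s j a ncs; rewrite /=; lia.
exists (tperm a j * s)%g; first exact: (nc_step_tperm ab (or_introl sa)).
exact: (total_displacement_merge ab sa).
Qed.

Lemma NC_nc_equiv1 n (s : 'S_n) : NC s -> nc_equiv 1%g s.
Proof.
have [m] := ubnP (total_displacement s); elim: m s => // m IH s lt_m ncs.
have [->|s1] := eqVneq s 1%g; first exact: rst_refl.
have [t st lt_t] := NC_displacement_descent ncs s1.
apply: rst_trans (IH t (leq_trans lt_t (ltnSE lt_m)) (nc_step_NC st ncs)) _.
by apply/rst_sym/rst_step.
Qed.

Theorem corollary7p9 (n : nat) (sigma : 'S_n) :
  nc_equiv 1%g sigma <-> NC sigma.
Proof.
split=> [eq1 | ncs]; last exact: NC_nc_equiv1.
exact/(nc_equiv_NC eq1)/NC1.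
Qed.
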